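(* If $X$ is a pseudocompact space and $G$ is an NSS group, then $C_p(X,G)$ is TAP.
   Context: All spaces are Tychonoff and non-empty; all topological groups are Hausdorff. $C_p(X,G)$ is the group of all continuous maps $X\to G$ with pointwise group operations and the topology of pointwise convergence. A topological group is NSS if some open neighborhood of the identity contains no nontrivial subgroup. A subset $A$ of a topological group $H$ is absolutely productive in $H$ if for every injection $a:\mathbb{N}\to A$ and every map $z:\mathbb{N}\to\mathbb{Z}$ the sequence $\left(\prod_{n=0}^{k}a(n)^{z(n)}\right)_{k\in\mathbb{N}}$ converges in $H$; $H$ is TAP if every absolutely productive subset of $H$ is finite. *)

From HB Require Import structures.
From mathcomp Require Import all_boot all_order all_algebra.
From mathcomp Require Import all_classical all_reals all_analysis.
From mathcomp Require Import Rstruct Rstruct_topology.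
Set Implicit Arguments. Unset Strict Implicit. Unset Printing Implicit Defensive.
Import Order.TTheory GRing.Theory Num.Theory.
Local Open Scope classical_set_scope.
Local Open Scope ring_scope.

Record topGroup (G : topologicalType) := TopGroup {
  tg_mul : G -> G -> G;
  tg_inv : G -> G;
  tg_one : G;
  tg_mulA : forall x y z, tg_mul x (tg_mul y z) = tg_mul (tg_mul x y) z;
  tg_mul1g : forall x, tg_mul tg_one x = x;
  tg_mulVg : forall x, tg_mul (tg_inv x) x = tg_one;
  tg_mul_cont : continuous (fun p : G * G => tg_mul p.1 p.2);
  tg_inv_cont : continuous tg_inv
}.

Definition zpow {T : Type} (mul : T -> T -> T) (inv : T -> T) (one : T)
  (g : T) (z : int) : T :=
  match z with
  | Posz n => iter n (mul g) one
  | Negz n => inv (iter n.+1 (mul g) one)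
  end.

Fixpoint partial_prod {T : Type} (mul : T -> T -> T) (inv : T -> T) (one : T)
  (a : nat -> T) (z : nat -> int) (k : nat) : T :=
  match k with
  | 0 => zpow mul inv one (a 0) (z 0)
  | k'.+1 => mul (partial_prod mul inv one a z k') (zpow mul inv one (a k) (z k))
  end.

(* absolutely productive subset of a group (mul, inv, one) whose topology is
   described by its convergence of sequences [conv u l] ("u converges to l") *)
Definition abs_productive {T : Type} (mul : T -> T -> T) (inv : T -> T) (one : T)
  (conv : (nat -> T) -> T -> Prop) (A : set T) : Prop :=
  forall (a : nat -> T) (z : nat -> int),
    injective a -> (forall n, A (a n)) ->
    exists l : T, conv (partial_prod mul inv one a z) l.

Definition is_subgroup {G : topologicalType} (gs : topGroup G) (H : set G) :=
  H (tg_one gs) /\ (forall x y, H x -> H y -> H (tg_mul gs x y)) /\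
  (forall x, H x -> H (tg_inv gs x)).

Definition NSS {G : topologicalType} (gs : topGroup G) : Prop :=
  exists U : set G, open U /\ U (tg_one gs) /\
    forall H : set G, is_subgroup gs H -> H `<=` U -> H = [set tg_one gs].

(* Convergence in the topology of pointwise convergence (the subspace topology
   of the product topology G^X): the limit is an element of C_p(X,G), i.e.
   a continuous map, and the sequence converges to it at every point. *)
Definition cp_mul {X G : topologicalType} (gs : topGroup G) (f g : X -> G) : X -> G :=
  fun x => tg_mul gs (f x) (g x).
Definition cp_inv {X G : topologicalType} (gs : topGroup G) (f : X -> G) : X -> G :=
  fun x => tg_inv gs (f x).
Definition cp_one {X G : topologicalType} (gs : topGroup G) : X -> G :=
  fun _ => tg_one gs.
Definition cp_conv {X G : topologicalType} (u : nat -> X -> G) (l : X -> G) : Prop :=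
  continuous l /\ forall x : X, (fun k => u k x) @ \oo --> l x.

Definition Cp_TAP (X G : topologicalType) (gs : topGroup G) : Prop :=
  forall A : set (X -> G), A `<=` [set f | continuous f] ->
    abs_productive (@cp_mul X G gs) (@cp_inv X G gs) (@cp_one X G gs)
                   (@cp_conv X G) A ->
    finite_set A.

Definition pseudocompact (X : topologicalType) : Prop :=
  forall f : X -> Rdefinitions.R, continuous f ->
    exists M : Rdefinitions.R, forall x, `|f x| <= M.

Definition tychonoff_space (X : topologicalType) : Prop :=
  hausdorff_space X /\ completely_regular_space X.

From HB Require Import structures.
From mathcomp Require Import all_boot all_order all_algebra.
From mathcomp Require Import all_classical all_reals all_analysis.
From mathcomp Require Import Rstruct Rstruct_topology zify.
Set Implicit Arguments. Unset Strict Implicit. Unset Printing Implicit Defensive.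
Import Order.TTheory GRing.Theory Num.Theory.
Local Open Scope classical_set_scope.

(* Let A be an infinite absolutely productive subset of C_p(X, G).  NSS gives
   an open neighbourhood V of 1 and an open set E such that every g <> 1 has a
   power in E and p g t is never in V for p, t in V and g in E.  Absolute
   productivity forces all but finitely many members of A to be trivial at
   any given point.  Each f in A other than 1 has a power lying in E on an
   open set O_f; by pseudocompactness these sets accumulate at a point x, and
   near x we extract a sequence c_j of members of A, exponents w_j and points
   y_j such that c_j^w_j (y_j) is in E, the later c_i vanish at y_j and the
   products of the earlier ones stay in V.  Then every tail product
   T_J = prod_(i >= J) c_i^w_i, continuous by absolute productivity, avoids V
   near y_j for J <= j; but at an accumulation point of these neighbourhoods
   some T_N is trivial, hence V-valued nearby. *)

Section GroupIdentities.
Variables (G : topologicalType) (gs : topGroup G).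
Local Notation mul := (tg_mul gs).
Local Notation inv := (tg_inv gs).
Local Notation one := (tg_one gs).

Lemma tg_mulKg x y : mul (inv x) (mul x y) = y.
Proof. by rewrite tg_mulA tg_mulVg tg_mul1g. Qed.

Lemma tg_mulgV x : mul x (inv x) = one.
Proof.
have e := tg_mulVg gs (inv x).
by rewrite -{1}(tg_mul1g gs (mul x (inv x))) -{1}e -tg_mulA (tg_mulKg x).
Qed.

Lemma tg_mulg1 x : mul x one = x.
Proof. by rewrite -(tg_mulVg gs x) tg_mulA tg_mulgV tg_mul1g. Qed.

Lemma tg_mulKVg x y : mul x (mul (inv x) y) = y.
Proof. by rewrite tg_mulA tg_mulgV tg_mul1g. Qed.

Lemma tg_mulgK x y : mul (mul x y) (inv y) = x.
Proof. by rewrite -tg_mulA tg_mulgV tg_mulg1. Qed.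

Lemma tg_mulg1_eq x y : mul x y = one -> y = inv x.
Proof. by move=> xy1; rewrite -(tg_mulKg x y) xy1 tg_mulg1. Qed.

Lemma tg_invgK x : inv (inv x) = x.
Proof. exact/esym/tg_mulg1_eq/tg_mulVg. Qed.

Lemma tg_invg1 : inv one = one.
Proof. by rewrite -[LHS](tg_mul1g gs) tg_mulgV. Qed.

Lemma tg_invM x y : inv (mul x y) = mul (inv y) (inv x).
Proof.
by symmetry; apply: tg_mulg1_eq; rewrite -tg_mulA tg_mulKVg tg_mulgV.
Qed.

End GroupIdentities.

HB.instance Definition _ (G : topologicalType) (gs : topGroup G) :=
  Monoid.isLaw.Build G (tg_one gs) (tg_mul gs)
    (@tg_mulA G gs) (@tg_mul1g G gs) (@tg_mulg1 G gs).

Section Powers.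
Variables (G : topologicalType) (gs : topGroup G).
Local Notation mul := (tg_mul gs).
Local Notation inv := (tg_inv gs).
Local Notation one := (tg_one gs).
Local Notation gpow := (zpow mul inv one).
Local Open Scope ring_scope.

Lemma zpowSr g z : gpow g (z + 1) = mul (gpow g z) g.
Proof.
have iterSr n : iter n.+1 (mul g) one = mul (iter n (mul g) one) g.
  elim: n => [|n IH]; first by rewrite /= tg_mulg1 tg_mul1g.
  by rewrite [LHS]iterS {1}IH tg_mulA.
case: z => [n|[|n]].
- have -> : (Posz n + 1 = Posz n.+1) by lia.
  exact: iterSr.
- have -> : (Negz 0 + 1 = Posz 0) by lia.
  by rewrite /= tg_mulg1 tg_mulVg.
- have -> : (Negz n.+1 + 1 = Negz n) by lia.
  by rewrite /zpow [in RHS]iterS tg_invM -tg_mulA tg_mulVg tg_mulg1.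
Qed.

Lemma zpowD g a b : gpow g (a + b) = mul (gpow g a) (gpow g b).
Proof.
have zpowBr z : gpow g (z - 1) = mul (gpow g z) (inv g).
  by rewrite -[in RHS](subrK 1 z) zpowSr tg_mulgK.
case: b => n; elim: n => [|n IH].
- by rewrite addr0 /= tg_mulg1.
- have -> : Posz n.+1 = n%:Z + 1 by lia.
  by rewrite addrA !zpowSr IH tg_mulA.
- have -> : Negz 0 = 0%:Z - 1 by lia.
  by rewrite addrA !zpowBr addr0 /= tg_mul1g.
- have -> : Negz n.+1 = Negz n - 1 by lia.
  by rewrite addrA !zpowBr IH tg_mulA.
Qed.

Lemma zpowN g a : gpow g (- a) = inv (gpow g a).
Proof. by apply: tg_mulg1_eq; rewrite -zpowD subrr. Qed.

Lemma zpow1 g : gpow g 1 = g.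
Proof. exact: tg_mulg1. Qed.

Lemma zpow1n k : gpow one k = one.
Proof.
have iter1 n : iter n (mul one) one = one by elim: n => //= n ->; rewrite tg_mul1g.
by case: k => n; rewrite /zpow iter1 ?tg_invg1.
Qed.

Lemma nss_zpow (U : set G) :
  (forall H : set G, is_subgroup gs H -> H `<=` U -> H = [set one]) ->
  forall g, g <> one -> exists k, ~ U (gpow g k).
Proof.
move=> nssU g; apply: contra_notP => /forallNP gU.
pose C := [set h | exists k, h = gpow g k].
have C_subgroup : is_subgroup gs C.
  split; first by exists 0.
  split; first by move=> _ _ [a ->] [b ->]; exists (a + b); rewrite zpowD.
  by move=> _ [a ->]; exists (- a); rewrite zpowN.
have : C g by exists 1; rewrite zpow1.
by rewrite (nssU C) // => _ [k ->]; apply: contrapT.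
Qed.

End Powers.

Section TopGroupLimits.
Variables (G : topologicalType) (gs : topGroup G).
Local Notation mul := (tg_mul gs).
Local Notation inv := (tg_inv gs).
Local Notation one := (tg_one gs).
Local Notation gpow := (zpow mul inv one).

Section Filters.
Context (T : Type) (F : set_system T) {FF : Filter F}.

Lemma cvg_tg_mul (f h : T -> G) a b :
  f @ F --> a -> h @ F --> b -> (fun t => mul (f t) (h t)) @ F --> mul a b.
Proof. by move=> fa hb; apply: cvg_comp2 fa hb (@tg_mul_cont _ gs (a, b)). Qed.

Lemma cvg_tg_inv (f : T -> G) a : f @ F --> a -> (fun t => inv (f t)) @ F --> inv a.
Proof. by move=> fa; apply: continuous_cvg => //; exact: tg_inv_cont. Qed.

Lemma cvg_zpow (f : T -> G) a k : f @ F --> a -> (fun t => gpow (f t) k) @ F --> gpow a k.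
Proof.
move=> fa; have cvg_iter n : (fun t => iter n (mul (f t)) one) @ F --> iter n (mul a) one.
  by elim: n => [|n IH] /=; [exact: cvg_cst | exact: cvg_tg_mul].
by case: k => n; [exact: cvg_iter | apply: cvg_tg_inv; exact: cvg_iter].
Qed.

End Filters.

Lemma cvg_tg_step (s : nat -> G) (l : G) :
  s @ \oo --> l -> (fun k => mul (inv (s k)) (s k.+1)) @ \oo --> one.
Proof.
move=> sl; rewrite -(tg_mulVg gs l); apply: cvg_tg_mul; first exact: cvg_tg_inv.
by move=> W /sl [N _ sW]; exists N => // k /= Nk; apply: sW; exact: leqW.
Qed.

Section Limits.
Hypothesis hG : hausdorff_space G.

Lemma lim_prod_split (s : nat -> G) (J j : nat) (L L' : G) : (J <= j)%N ->
  (fun n => \big[mul/one]_(J <= i < n) s i) @ \oo --> L ->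
  (fun n => \big[mul/one]_(j <= i < n) s i) @ \oo --> L' ->
  L = mul (\big[mul/one]_(J <= i < j) s i) L'.
Proof.
move=> Jj sL sL'; apply: (cvg_unique hG sL) => /=.
pose P := \big[mul/one]_(J <= i < j) s i.
apply: cvg_trans _ (cvg_tg_mul (cvg_cst P) sL'); apply: near_eq_cvg.
by exists j => // n /= jn; rewrite (big_cat_nat Jj jn).
Qed.

Lemma lim_prod_one (s : nat -> G) (J : nat) (L : G) :
  (forall i, (J <= i)%N -> s i = one) ->
  (fun n => \big[mul/one]_(J <= i < n) s i) @ \oo --> L -> L = one.
Proof.
move=> s1; rewrite (_ : (fun n => _) = fun=> one) => [sL|].
  by apply: (cvg_unique hG sL) => /=; exact: cvg_cst.
apply: funext => n; rewrite big_nat_cond big1 // => i /andP[/andP[Ji _] _].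
exact: s1.
Qed.

End Limits.

Lemma nbhs_tg_mul (W : set G) : nbhs one W ->
  exists A B, [/\ nbhs one A, nbhs one B & forall a b, A a -> B b -> W (mul a b)].
Proof.
rewrite -[in nbhs one W](tg_mulg1 gs one) => /(@tg_mul_cont _ gs (one, one)).
by case=> -[A B] /= [nA nB] AB; exists A, B; split=> // a b Aa Bb; exact: (AB (a, b)).
Qed.

Lemma nbhs_tg_inv (W : set G) : nbhs one W -> nbhs one (inv @^-1` W).
Proof. by rewrite -[in nbhs one W]tg_invg1; exact: tg_inv_cont. Qed.

Lemma nbhs_one_sandwich (W : set G) : nbhs one W ->
  exists V, [/\ open V, V one &
    forall p s t, V p -> V s -> V t -> W (mul (inv p) (mul s (inv t)))].
Proof.
move=> /nbhs_tg_mul [A1 [B1 [nA1 /nbhs_tg_mul [A2 [B2 [nA2 nB2 AB2]]] AB1]]].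
have : nbhs one (inv @^-1` A1 `&` A2 `&` inv @^-1` B2).
  by apply: filterI; [apply: filterI; [exact: nbhs_tg_inv|] | exact: nbhs_tg_inv].
rewrite nbhsE => -[V [oV V1] VA]; exists V; split=> // p s t Vp Vs Vt.
have [[Ap _] _] := VA p Vp; have [[_ As] _] := VA s Vs; have [_ Bt] := VA t Vt.
exact: AB1 (AB2 _ _ As Bt).
Qed.

Lemma closure_sandwich_sub (W V : set G) : open V -> V one ->
  (forall p s t, V p -> V s -> V t -> W (mul (inv p) (mul s (inv t)))) ->
  closure V `<=` W.
Proof.
move=> oV V1 VW g clVg.
have : nbhs g [set h | V (mul h (inv g))].
  apply: (@cvg_tg_mul _ _ _ id (fun=> inv g) g (inv g) cvg_id (cvg_cst _)).
  by rewrite tg_mulgV; exact: open_nbhs_nbhs.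
move=> /clVg [h [Vh Vhg]].
have := VW _ _ _ Vhg Vh V1.
by rewrite tg_invM tg_invgK tg_invg1 tg_mulg1 -tg_mulA tg_mulVg tg_mulg1.
Qed.

Lemma nss_escape : NSS gs -> exists E V : set G, [/\ open E, open V, V one,
  forall g, g <> one -> exists k, E (gpow g k) &
  forall p g t, V p -> E g -> V t -> ~ V (mul (mul p g) t)].
Proof.
case=> U [oU [U1 nssU]].
have [V0 [oV0 V01 V0U]] := nbhs_one_sandwich (open_nbhs_nbhs (conj oU U1)).
have [V [oV V1 VV0]] := nbhs_one_sandwich (open_nbhs_nbhs (conj oV0 V01)).
exists (~` closure V0), V; split=> //.
- exact/closed_openC/closed_closure.
- move=> g /(nss_zpow nssU) [k gkU]; exists k.
  by move=> /(closure_sandwich_sub oV0 V01 V0U).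
- move=> p g t Vp clg Vt Vpgt; apply/clg/subset_closure.
  by have := VV0 _ _ _ Vp Vpgt Vt; rewrite tg_mulgK tg_mulKg.
Qed.

End TopGroupLimits.

Section PointwiseProducts.
Variables (X G : topologicalType) (gs : topGroup G).
Local Notation mul := (tg_mul gs).
Local Notation inv := (tg_inv gs).
Local Notation one := (tg_one gs).
Local Notation gpow := (zpow mul inv one).

Lemma cp_zpowE (f : X -> G) k y :
  zpow (cp_mul gs) (cp_inv gs) (cp_one gs) f k y = gpow (f y) k.
Proof.
have iterE n : iter n (cp_mul gs f) (cp_one gs) y = iter n (mul (f y)) one.
  by elim: n => //= n IH; rewrite /cp_mul IH.
by case: k => n; rewrite /zpow /cp_inv iterE.
Qed.

Lemma cp_partial_prodE (a : nat -> X -> G) z k y :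
  partial_prod (cp_mul gs) (cp_inv gs) (cp_one gs) a z k y =
  \big[mul/one]_(0 <= i < k.+1) gpow (a i y) (z i).
Proof.
elim: k => [|k IH]; first by rewrite big_nat1 /= cp_zpowE.
by rewrite big_nat_recr //= /cp_mul IH cp_zpowE.
Qed.

Lemma abs_productive_lim (A : set (X -> G)) (a : nat -> X -> G) (z : nat -> int) :
  abs_productive (cp_mul gs) (cp_inv gs) (cp_one gs) (@cp_conv X G) A ->
  injective a -> (forall n, A (a n)) ->
  exists l : X -> G, continuous l /\
    forall y, (fun n => \big[mul/one]_(0 <= i < n) gpow (a i y) (z i)) @ \oo --> l y.
Proof.
move=> prodA ia Aa; have [l [cl al]] := prodA a z ia Aa.
exists l; split=> // y W /(al y) [N _ NW]; exists N.+1 => // -[|n] //= Nn.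
by have := NW n Nn; rewrite /= cp_partial_prodE.
Qed.

End PointwiseProducts.

Section Pseudocompact.
Local Open Scope ring_scope.
Local Notation R := Rdefinitions.R.
Variable X : topologicalType.

Lemma bump_function : completely_regular_space X ->
  forall (y : X) (O : set X), nbhs y O ->
  exists g : X -> R, [/\ continuous g, g y = 1, forall z, 0 <= g z &
                         forall z, ~ O z -> g z = 0].
Proof.
move=> crX y O; rewrite nbhsE => -[B [oB By] BO].
have /(@uniform_separatorP _ R) [f [cf f01 fy fB]] :
    uniform_separator [set y] (~` B).
  by apply: crX; [exact: open_closedC | move=> /(_ By)].
exists (fun z => 1 - f z); split.
- move=> z; apply: (@cvgB R R^o X (nbhs z) _ (fun=> 1) f); [exact: cvg_cst | exact: cf].
- by rewrite (fy (f y)) ?subr0 //; exists y.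
- move=> z; have /andP[_ f1] : 0 <= f z <= 1.
    by have := f01 (f z); rewrite /= in_itv /=; apply; exists z.
  by rewrite subr_ge0.
- by move=> z Oz; rewrite (fB (f z)) ?subrr //; exists z => // /BO.
Qed.

Lemma sum_ord_trunc (F : nat -> R) n m : (n <= m)%N ->
  (forall i, (n <= i)%N -> F i = 0) -> \sum_(i < m) F i = \sum_(i < n) F i.
Proof.
move=> nm F0; rewrite -!(big_mkord xpredT) (big_cat_nat (leq0n n) nm) /=.
rewrite [X in _ + X]big1_seq ?addr0 // => i /andP[_].
by rewrite mem_index_iota => /andP[ni _]; exact: F0.
Qed.

Lemma continuous_locally_finite_sum (g : nat -> X -> R) (K : X -> nat) :
  (forall i, continuous (g i)) ->
  (forall x, \forall z \near x, forall i, (K x <= i)%N -> g i z = 0) ->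
  continuous (fun z => \sum_(i < K z) g i z).
Proof.
move=> cg gK x.
have near_sum : \forall z \near x, \sum_(i < K x) g i z = \sum_(i < K z) g i z.
  apply: filterS (gK x) => z gKx.
  have gKz := nbhs_singleton (gK z).
  have g0 i : (minn (K x) (K z) <= i)%N -> g i z = 0.
    by rewrite geq_min => /orP[Ki|Ki]; [exact: gKx | exact: gKz].
  by rewrite (sum_ord_trunc (geq_minl _ _) g0) (sum_ord_trunc (geq_minr _ _) g0).
have cont_sum : continuous (fun z => \sum_(i < K x) g i z).
  have add_cont : continuous (fun p : R * R => p.1 + p.2).
    move=> p; apply: (@cvgD R R^o _ (nbhs p) _ fst snd).
      exact: cvg_fst.
    exact: cvg_snd.
  by apply: (continuous_big add_cont) => i _; exact: cg.
exact: cvg_trans (near_eq_cvg near_sum) (cont_sum x).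
Qed.

(* A pseudocompact space admits no infinite locally finite family of
   non-empty open sets; otherwise the sum of bump functions supported in
   them, weighted by their index, is a continuous unbounded function. *)
Lemma pseudocompact_cluster : completely_regular_space X -> pseudocompact X ->
  forall (y : nat -> X) (O : nat -> set X), (forall j, nbhs (y j) (O j)) ->
  exists x : X, forall N, nbhs x N -> forall K, exists2 j, (K <= j)%N & O j `&` N !=set0.
Proof.
move=> crX pcX y O yO; apply: contrapT => no_cluster.
have sep : forall x : X, exists NKx : set X * nat, nbhs x NKx.1 /\
    forall j, (NKx.2 <= j)%N -> forall z, O j z -> ~ NKx.1 z.
  move=> x; apply: contrapT => nsep; apply: no_cluster; exists x => N xN K.
  apply: contrapT => farK; apply: nsep; exists (N, K); split=> // j Kj z Oz Nz.
  by apply: farK; exists j => //; exists z.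
have [NK NK_sep] := choice sep.
have bump : forall j, exists gj : X -> R, [/\ continuous gj, gj (y j) = 1,
    forall z, 0 <= gj z & forall z, ~ O j z -> gj z = 0].
  by move=> j; exact: bump_function.
have [g g_bump] := choice bump.
pose K x := (NK x).2.
pose h z := \sum_(i < K z) i%:R * g i z.
have cont_h : continuous h.
  apply: (@continuous_locally_finite_sum (fun i z => i%:R * g i z) K) => [i z|x].
    apply: (@cvgM R X (nbhs z) _ (fun=> i%:R) (g i)); first exact: cvg_cst.
    by have [cg _ _ _] := g_bump i; exact: cg.
  have [Nx Nx_sep] := NK_sep x; apply: filterS Nx => z Nz i Ki.
  have [_ _ _ ->] := g_bump i; first by rewrite mulr0.
  by move=> Oz; exact: Nx_sep i Ki z Oz Nz.
have [M hM] := pcX h cont_h.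
have M0 : 0 <= M by apply: le_trans (hM (y 0)).
pose j := Num.Def.archi_bound M.
have jK : (j < K (y j))%N.
  rewrite ltnNge; apply/negP => Kj; have [yN yN_sep] := NK_sep (y j).
  exact: yN_sep j Kj (y j) (nbhs_singleton (yO j)) (nbhs_singleton yN).
have : j%:R <= h (y j).
  have [_ gy _ _] := g_bump j.
  rewrite /h (bigD1 (Ordinal jK)) //= gy mulr1 lerDl.
  by apply: sumr_ge0 => i _; have [_ _ g0 _] := g_bump i; rewrite mulr_ge0.
move=> /(lt_le_trans (archi_boundP M0)) /(le_lt_trans (hM (y j))).
by rewrite ltNge ler_norm.
Qed.

End Pseudocompact.

Lemma infinite_set_inj_seq (T : Type) (B : set T) :
  infinite_set B -> exists a : nat -> T, injective a /\ forall n, B (a n).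
Proof.
move=> /infiniteP /asboolP [f]; pose a n := sval (f (exist _ n (mem_set I))).
exists a; split=> [m n /val_inj /(inj (in_setT _) (in_setT _)) /(congr1 val) //|n].
exact/set_mem/(svalP (f _)).
Qed.

Lemma choice_history (T : Type) (P : seq T -> T -> Prop) :
  (forall s, exists t, P s t) -> exists f : nat -> T, forall j, P (mkseq f j) (f j).
Proof.
move=> Pex; have [next Pnext] := choice Pex.
pose fix hist j := if j is j'.+1 then rcons (hist j') (next (hist j')) else [::].
exists (fun j => next (hist j)).
suff hist_mkseq j : hist j = mkseq (fun j => next (hist j)) j.
  by move=> j; rewrite -hist_mkseq.
by elim: j => //= j IH; rewrite mkseqS -IH.
Qed.

Section TAP.
Variables (X G : topologicalType) (gs : topGroup G).
Local Notation mul := (tg_mul gs).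
Local Notation inv := (tg_inv gs).
Local Notation one := (tg_one gs).
Local Notation gpow := (zpow mul inv one).

Definition pprod (c : nat -> X -> G) (w : nat -> int) (m n : nat) (y : X) : G :=
  \big[mul/one]_(m <= i < n) gpow (c i y) (w i).

Lemma pprod_continuous c w m n :
  (forall i, continuous (c i)) -> continuous (pprod c w m n).
Proof.
move=> cc; apply: (continuous_big (@tg_mul_cont _ gs)) => i _ y.
by apply: cvg_zpow; exact: cc.
Qed.

Lemma pprod_one c w m n y : (forall i, (m <= i)%N -> c i y = one) -> pprod c w m n y = one.
Proof.
move=> c1; rewrite /pprod big_nat_cond big1 // => i /andP[/andP[mi _] _].
by rewrite c1 // zpow1n.
Qed.

Definition tail_limits c w (T : nat -> X -> G) :=
  forall J, continuous (T J) /\ forall y, pprod c w J n y @[n --> \oo] --> T J y.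

Hypotheses (crX : completely_regular_space X) (pcX : pseudocompact X).
Hypothesis hG : hausdorff_space G.

Lemma tail_limit_one c w T J y : tail_limits c w T ->
  (forall i, (J <= i)%N -> c i y = one) -> T J y = one.
Proof.
move=> T_lim c1; have [_ TJ] := T_lim J.
by apply: lim_prod_one hG _ _ _ _ (TJ y) => i Ji; rewrite c1 // zpow1n.
Qed.

Lemma tail_limit_split c w T J j y : tail_limits c w T -> (J <= j)%N ->
  T J y = mul (mul (pprod c w J j y) (gpow (c j y) (w j))) (T j.+1 y).
Proof.
move=> T_lim Jj; have [_ TJ] := T_lim J; have [_ Tj] := T_lim j.+1.
by rewrite (lim_prod_split hG (leqW Jj) (TJ y) (Tj y)) big_nat_recr.
Qed.

Variables (E V : set G) (A : set (X -> G)).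
Hypotheses (oE : open E) (oV : open V) (V1 : V one).
Hypothesis E_zpow : forall g, g <> one -> exists k, E (gpow g k).
Hypothesis EV_far : forall p g t, V p -> E g -> V t -> ~ V (mul (mul p g) t).
Hypothesis A_cont : A `<=` [set f | continuous f].
Hypothesis A_prod :
  abs_productive (cp_mul gs) (cp_inv gs) (cp_one gs) (@cp_conv X G) A.

Lemma EV_disjoint g : E g -> ~ V g.
Proof. by move=> Eg Vg; apply: (EV_far V1 Eg V1); rewrite tg_mulg1 tg_mul1g. Qed.

Lemma tail_limits_exist c w : injective c -> (forall n, A (c n)) ->
  exists T, tail_limits c w T.
Proof.
move=> ic Ac.
suff lim_ex J : exists TJ : X -> G, continuous TJ /\
    forall y, pprod c w J n y @[n --> \oo] --> TJ y.
  by have [T T_lim] := choice lim_ex; exists T.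
have [l [cl lim_l]] := abs_productive_lim (fun i => w (J + i)) A_prod
  (fun i1 i2 e => addnI (ic _ _ e)) (fun i => Ac (J + i)).
exists l; split=> // y; apply: cvg_trans (cvg_comp _ _ (cvg_subnr J) (lim_l y)).
apply: near_eq_cvg; exists J => // n /= Jn.
by rewrite /pprod -[in RHS](add0n J) big_addn; apply: eq_bigr => i _; rewrite addnC.
Qed.

(* At a point where all but finitely many members of [A] were non-trivial,
   suitable powers of them would stay in [E] while the consecutive
   quotients of the convergent partial products tend to one. *)
Lemma eventually_one b : injective b -> (forall n, A (b n)) ->
  forall y, exists N, forall n, (N <= n)%N -> b n y = one.
Proof.
move=> ib Ab y.
have zex n : exists k, b n y <> one -> E (gpow (b n y) k).
  by case: (pselect (b n y = one)) => [-> | /E_zpow [k Ek]]; [exists 0%R | exists k].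
have [z zE] := choice zex.
have [l [_ /(_ y) /(@cvg_tg_step _ gs) lim1]] := abs_productive_lim z A_prod ib Ab.
have [N _ NV] := lim1 V (open_nbhs_nbhs (conj oV V1)).
exists N => n Nn; apply: contrapT => bn1; apply: (EV_disjoint (zE n bn1)).
by have := NV n Nn; rewrite /= big_nat_recr //= tg_mulKg.
Qed.

Definition escaping (c : nat -> X -> G) (w : nat -> int) (y : nat -> X) :=
  [/\ forall j i, (j < i)%N -> c i (y j) = one,
      forall j, E (gpow (c j (y j)) (w j)) &
      forall J j, (J <= j)%N -> V (pprod c w J j (y j))].

Lemma escaping_far_nbhs c w y T : (forall i, continuous (c i)) ->
  escaping c w y -> tail_limits c w T ->
  forall j, nbhs (y j) [set z | forall J, (J <= j)%N -> ~ V (T J z)].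
Proof.
move=> cc [c_one c_far c_near] T_lim j.
have near_prod : \forall z \near y j, forall J : 'I_j.+1, V (pprod c w J j z).
  apply: filter_forall => J; apply: (pprod_continuous (w := w) (m := J) (n := j) cc).
  by apply: open_nbhs_nbhs; split=> //; apply: c_near; rewrite -ltnS.
have near_far : \forall z \near y j, E (gpow (c j z) (w j)).
  by apply: cvg_zpow (cc j (y j)) _ _; exact: open_nbhs_nbhs.
have near_tail : \forall z \near y j, V (T j.+1 z).
  have [cT _] := T_lim j.+1; apply: cT.
  rewrite (tail_limit_one T_lim); first exact: open_nbhs_nbhs.
  by move=> i; exact: c_one.
apply: filterS (filterI near_prod (filterI near_far near_tail)).
move=> z [Vp [Ec VT]] J Jj; rewrite (tail_limit_split _ T_lim Jj).
exact: EV_far (Vp (Ordinal (Jj : (J < j.+1)%N))) Ec VT.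
Qed.

(* By [escaping_far_nbhs] the neighbourhoods of the points [y j] keep every
   [T J], [J <= j], out of [V]; at a cluster point [x] of these
   neighbourhoods some tail limit [T N] is trivial, hence [V]-valued nearby. *)
Lemma not_escaping c w y : injective c -> (forall n, A (c n)) -> ~ escaping c w y.
Proof.
move=> ic Ac esc.
have cc i : continuous (c i) := A_cont (Ac i).
have [T T_lim] := tail_limits_exist w ic Ac.
have [x x_cluster] := pseudocompact_cluster crX pcX (escaping_far_nbhs cc esc T_lim).
have [N cN] := eventually_one ic Ac x.
have [cT _] := T_lim N.
have near_VT : \forall z \near x, V (T N z).
  by apply: cT; rewrite (tail_limit_one T_lim cN); exact: open_nbhs_nbhs.
have [j Nj [z [farz Vz]]] := x_cluster _ near_VT N.
exact: farz N Nj Vz.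
Qed.

(* The pairs [(nj j, y j)] are chosen inductively near [x], where all the
   products are trivial; [Nf z] bounds the indices of the [b n] not vanishing
   at [z]. *)
Lemma escaping_subseq b k x : injective b -> (forall n, A (b n)) ->
  (forall n, b n x = one) ->
  (forall N, nbhs x N -> forall K,
     exists2 n, (K <= n)%N & [set z | E (gpow (b n z) (k n))] `&` N !=set0) ->
  exists (nj : nat -> nat) (y : nat -> X),
    injective nj /\ escaping (fun j => b (nj j)) (fun j => k (nj j)) y.
Proof.
move=> ib Ab bx1 bx_cluster.
have cb i : continuous (b i) := A_cont (Ab i).
have [Nf Nf_one] := choice (eventually_one ib Ab).
pose d := (0%N, x).
pose step (s : seq (nat * X)) (t : nat * X) := [/\
  forall i, (i < size s)%N -> ((nth d s i).1 < t.1)%N /\ (Nf (nth d s i).2 <= t.1)%N,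
  E (gpow (b t.1 t.2) (k t.1)) &
  forall J, (J <= size s)%N ->
    V (pprod (fun i => b (nth d s i).1) (fun i => k (nth d s i).1) J (size s) t.2)].
have step_ex s : exists t, step s t.
  pose F i := maxn (nth d s i).1.+1 (Nf (nth d s i).2).
  have near_x : \forall z \near x, forall J : 'I_(size s).+1,
      V (pprod (fun i => b (nth d s i).1) (fun i => k (nth d s i).1) J (size s) z).
    apply: filter_forall => J; apply: (@pprod_continuous _ _ J (size s)) => [i|].
      exact: cb.
    by rewrite pprod_one => [|i _]; [exact: open_nbhs_nbhs | exact: bx1].
  have [n Mn [z [Ez Nz]]] := bx_cluster _ near_x (\max_(i < size s) F i).+1.
  exists (n, z); split=> //= [i si|J Js].
    have := @leq_bigmax _ (fun i : 'I_(size s) => F i) (Ordinal si).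
    by move: Mn; rewrite /F /=; lia.
  exact: Nz (Ordinal (Js : (J < (size s).+1)%N)).
have [f f_step] := choice_history step_ex.
pose nj j := (f j).1; pose y j := (f j).2.
have f_incr i j : (i < j)%N -> (nj i < nj j)%N /\ (Nf (y i) <= nj j)%N.
  move=> ij; have [inc _ _] := f_step j.
  by move: (inc i); rewrite size_mkseq nth_mkseq //; exact.
exists nj, y; split.
  move=> i j eq_ij; case: (ltngtP i j) => // lt;
    by have := (f_incr _ _ lt).1; rewrite eq_ij ltnn.
split=> [j i ji|j|J j Jj]; first exact/Nf_one/(f_incr _ _ ji).2.
  by have [] := f_step j.
have [_ _ /(_ J)] := f_step j; rewrite size_mkseq => /(_ Jj).
by congr V; apply: eq_big_nat => i /andP[_ ij]; rewrite nth_mkseq.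
Qed.

Lemma escaping_exists : infinite_set A ->
  exists c w y, [/\ injective c, forall n, A (c n) & escaping c w y].
Proof.
move=> A_inf.
have [a [ia Aa]] := infinite_set_inj_seq (infinite_setD A_inf (finite_set1 (cp_one gs))).
have aA n : A (a n) by have [] := Aa n.
have a_far n : exists yk : X * int, E (gpow (a n yk.1) yk.2).
  have [_ a_ne] := Aa n.
  have [y ay] : exists y, a n y <> one.
    apply: contrapT => /forallNP a1; apply: a_ne; apply: funext => y.
    exact: contrapT (a1 y).
  by have [k Ek] := E_zpow ay; exists (y, k).
have [yk yk_far] := choice a_far.
have ca n : continuous (a n) := A_cont (aA n).
have O_nbhs n : nbhs (yk n).1 [set z | E (gpow (a n z) (yk n).2)].
  by apply: cvg_zpow (ca n (yk n).1) _ _; exact: open_nbhs_nbhs.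
have [x x_cluster] := pseudocompact_cluster crX pcX O_nbhs.
have [N0 aN0] := eventually_one ia aA x.
pose b n := a (N0 + n); pose k n := (yk (N0 + n)).2.
have ib : injective b by move=> m n /ia /addnI.
have [||nj [y [inj_nj esc]]] := @escaping_subseq b k x ib (fun n => aA _).
- by move=> n; apply: aN0; exact: leq_addr.
- move=> N xN K; have [j Kj ON] := x_cluster N xN (N0 + K).
  exists (j - N0); first lia.
  by rewrite /b /k subnKC //; lia.
exists (fun j => b (nj j)), (fun j => k (nj j)), y.
by split=> // [i j /ib /inj_nj //|n]; exact: aA.
Qed.

End TAP.

Theorem theorem6p3 (X G : topologicalType) (gs : topGroup G) :
  tychonoff_space X -> (exists x : X, True) -> pseudocompact X ->
  hausdorff_space G -> NSS gs ->
  Cp_TAP X gs.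
Proof.
move=> [_ crX] _ pcX hG /nss_escape [E [V [oE oV V1 E_zpow EV_far]]] A A_cont A_prod.
apply: contrapT => A_inf.
have [c [w [y [ic Ac esc]]]] :=
  escaping_exists crX pcX oE oV V1 E_zpow EV_far A_cont A_prod A_inf.
exact: (not_escaping crX pcX hG oE oV V1 E_zpow EV_far A_cont A_prod ic Ac esc).
Qed.
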